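(* Let $(\mathfrak g,[\cdot,\cdot]_{\mathfrak g},E)$ be an ENL algebra and $r\in\mathfrak g\otimes\mathfrak g$ skew-symmetric. Define $r_+:\mathfrak g^*\to\mathfrak g$ by $\langle\eta,r_+(\xi)\rangle=\langle\xi\otimes\eta,r\rangle$. Then $r_+$ is an ENE-relative Rota–Baxter operator on $(\mathfrak g,[\cdot,\cdot]_{\mathfrak g},E)$ with respect to the coadjoint ENE-representation $(\mathfrak g^*;E^*,\mathrm{ad}^* )$ if and only if $r$ is an EN $r$-matrix, i.e. $[\![r,r]\!]=0$ and $(\mathrm{Id}\otimes E-E\otimes\mathrm{Id})(r)=0$.
   Context: Vector spaces are finite-dimensional over an algebraically closed field of characteristic zero. An ENL algebra is a Lie algebra with linear $E$ satisfying $E[x,y]=[x,Ey]$ for all $x,y$. Coadjoint ENE-representation: $\langle\mathrm{ad}^*_x\xi,y\rangle=-\langle\xi,[x,y]_{\mathfrak g}\rangle$ and $E^*$ the dual map of $E$. An ENE-relative Rota–Baxter operator with respect to an ENE-representation $(W;T,\rho)$ is a linear $K:W\to\mathfrak g$ with $[Ku,Kv]_{\mathfrak g}=K(\rho(Ku)v-\rho(Kv)u)$ for all $u,v$ and $E\circ K=K\circ T$. For $r=\sum a_i\otimes b_i$, $[\![r,r]\!]=[r_{12},r_{13}]+[r_{13},r_{23}]+[r_{12},r_{23}]$ in $U(\mathfrak g)^{\otimes3}$ with $r_{12}=\sum a_i\otimes b_i\otimes1$, $r_{13}=\sum a_i\otimes1\otimes b_i$, $r_{23}=\sum1\otimes a_i\otimes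 b_i$. *)

(* Coordinates: g = F^n (row vectors 'rV[F]_n), g^* = F^n with
   the standard pairing; tensors in g (x) g are n x n coefficient matrices,
   tensors in g (x) g (x) g are functions 'I_n -> 'I_n -> 'I_n -> F. *)
From HB Require Import structures.
From mathcomp Require Import all_boot all_order all_algebra.
Set Implicit Arguments. Unset Strict Implicit. Unset Printing Implicit Defensive.
Import Order.TTheory GRing.Theory Num.Theory.
Local Open Scope ring_scope.

Section Defs.
Variables (F : fieldType) (n : nat).
Notation V := 'rV[F]_n.

Definition ebas (i : 'I_n) : V := delta_mx 0 i.

Definition pair (xi x : V) : F := \sum_(i < n) xi 0 i * x 0 i.

Definition dualmap (f : V -> V) (xi : V) : V := \row_j pair xi (f (ebas j)).

Definition is_lie_bracket (br : V -> V -> V) : Prop :=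
  [/\ (forall (a : F) (x y z : V), br (a *: x + y) z = a *: br x z + br y z),
      (forall x y : V, br x y = - br y x)
    & (forall x y z : V, br x (br y z) + br y (br z x) + br z (br x y) = 0)].

Definition linop (E : 'M[F]_n) (x : V) : V := x *m E.

Definition is_ENL (br : V -> V -> V) (E : 'M[F]_n) : Prop :=
  is_lie_bracket br /\ forall x y : V, linop E (br x y) = br x (linop E y).

Definition coad (br : V -> V -> V) (x : V) (xi : V) : V :=
  - dualmap (br x) xi.

Definition is_ENE_RB (br : V -> V -> V) (E : 'M[F]_n)
  (T : V -> V) (rho : V -> V -> V) (K : V -> V) : Prop :=
  (forall u v : V, br (K u) (K v) = K (rho (K u) v - rho (K v) u)) /\
  (forall u : V, linop E (K u) = K (T u)).

Definition tens (u v : V) : 'M[F]_n := \matrix_(i, j) (u 0 i * v 0 j).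

Definition tmap (f g : V -> V) (r : 'M[F]_n) : 'M[F]_n :=
  \sum_(i < n) \sum_(j < n) r i j *: tens (f (ebas i)) (g (ebas j)).

Definition skew_tensor (r : 'M[F]_n) : Prop := r^T = - r.

(* r_+ : g^* -> g,  <eta, r_+ xi> = <xi (x) eta, r> = sum_ij xi_i eta_j r_ij *)
Definition rplus (r : 'M[F]_n) (xi : V) : V := xi *m r.

Definition tens3 (u v w : V) (i j k : 'I_n) : F := u 0 i * v 0 j * w 0 k.

(* [[r,r]] = [r12,r13] + [r13,r23] + [r12,r23] for r = sum r_pq e_p (x) e_q *)
Definition CYB (br : V -> V -> V) (r : 'M[F]_n) (i j k : 'I_n) : F :=
  \sum_(p < n) \sum_(q < n) \sum_(s < n) \sum_(t < n)
    r p q * r s t *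
    (tens3 (br (ebas p) (ebas s)) (ebas q) (ebas t) i j k
     + tens3 (ebas p) (ebas s) (br (ebas q) (ebas t)) i j k
     + tens3 (ebas p) (br (ebas q) (ebas s)) (ebas t) i j k).

Definition is_EN_rmatrix (br : V -> V -> V) (E : 'M[F]_n) (r : 'M[F]_n) : Prop :=
  (forall i j k : 'I_n, CYB br r i j k = 0) /\
  tmap id (linop E) r - tmap (linop E) id r = 0.

End Defs.

From HB Require Import structures.
From mathcomp Require Import all_boot all_order all_algebra.
From mathcomp Require Import ring.
Import Order.TTheory GRing.Theory Num.Theory.
Set Implicit Arguments. Unset Strict Implicit. Unset Printing Implicit Defensive.
Local Open Scope ring_scope.

(* Write R for r_+ and D(u, v) = [R u, R v] - R (ad^*_{R u} v - ad^*_{R v} u)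
   for the Rota-Baxter defect. Skew-symmetry of r gives (R w)_k = - <w, R e_k>,
   hence D(u, v)_k = [R u, R v]_k - <v, [R u, R e_k]> + <u, [R v, R e_k]>.
   Collapsing the Kronecker deltas in [[r, r]] shows that its (i, j, k)
   coefficient is the same expression for u = e_i, v = e_j. Since D is bilinear
   and skew, it vanishes iff it vanishes on basis vectors, i.e. iff [[r, r]] = 0.
   In coordinates E r_+ = r_+ E^* reads r E = E^T r, which is
   (Id (x) E - E (x) Id)(r) = 0. *)

Section Coordinates.
Variables (F : fieldType) (n : nat).
Local Notation V := 'rV[F]_n.

Lemma ebasE (i a : 'I_n) : ebas F i 0 a = (i == a)%:R.
Proof. by rewrite mxE eqxx eq_sym. Qed.

Lemma ebas_mulmx (A : 'M[F]_n) (i : 'I_n) : ebas F i *m A = row i A.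
Proof. by rewrite rowE. Qed.

Lemma pair_ebasl (i : 'I_n) (x : V) : pair (ebas F i) x = x 0 i.
Proof.
rewrite /pair (big_only1 i) // => [|p ip _]; first by rewrite ebasE eqxx mul1r.
by rewrite ebasE eq_sym (negbTE ip) mul0r.
Qed.

Lemma pairNl (xi x : V) : pair (- xi) x = - pair xi x.
Proof. by rewrite /pair -sumrN; apply: eq_bigr => i _; rewrite !mxE mulNr. Qed.

Lemma pair_scalarl (x : V) : scalar (fun xi : V => pair xi x).
Proof.
move=> a xi eta; rewrite /pair mulr_sumr -big_split; apply: eq_bigr => i _ /=.
by rewrite !mxE mulrDl mulrA.
Qed.

Lemma pair_scalarr (xi : V) : scalar (fun x : V => pair xi x).
Proof.
move=> a x y; rewrite /pair mulr_sumr -big_split; apply: eq_bigr => i _ /=.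
by rewrite !mxE; ring.
Qed.

Lemma pairBl (xi eta x : V) : pair (xi - eta) x = pair xi x - pair eta x.
Proof.
by rewrite /pair -sumrB; apply: eq_bigr => i _; rewrite !mxE mulrBl.
Qed.

Lemma linear_ebas_expand {W : lmodType F} {f : V -> W} : linear f ->
  forall x, f x = \sum_i x 0 i *: f (ebas F i).
Proof.
move=> fL x; pose g : {linear V -> W} := HB.pack f (GRing.isLinear.Build _ _ _ _ f fL).
rewrite -[f x]/(g x) {1}(row_sum_delta x) linear_sum.
by apply: eq_bigr => i _; rewrite linearZ.
Qed.

Lemma pair_dualmap (f : V -> V) : linear f ->
  forall xi y, pair (dualmap f xi) y = pair xi (f y).
Proof.
move=> fL xi y; rewrite (linear_ebas_expand fL y) /pair.
under [RHS]eq_bigr => i _ do rewrite summxE mulr_sumr.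
rewrite exchange_big; apply: eq_bigr => j _ /=.
rewrite mxE mulr_suml; apply: eq_bigr => i _.
by rewrite !mxE; ring.
Qed.

Lemma dualmap_linop (A : 'M[F]_n) (xi : V) : dualmap (linop A) xi = xi *m A^T.
Proof.
apply/rowP => j; rewrite !mxE /pair; apply: eq_bigr => k _.
by rewrite /linop ebas_mulmx !mxE.
Qed.

Lemma tens_mulmx (u v : V) : tens u v = u^T *m v.
Proof. by apply/matrixP => i j; rewrite !mxE big_ord1 !mxE. Qed.

Lemma tmap_linop (f g : V -> V) (A B r : 'M[F]_n) :
  f =1 linop A -> g =1 linop B -> tmap f g r = A^T *m r *m B.
Proof.
move=> fA gB; rewrite {2}(matrix_sum_delta r) mulmx_sumr mulmx_suml.
apply: eq_bigr => i _; rewrite mulmx_sumr mulmx_suml; apply: eq_bigr => j _.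
rewrite tens_mulmx fA gB /linop /ebas trmx_mul trmx_delta mulmxA.
by rewrite -(mulmxA _ (delta_mx i 0)) mul_delta_mx scalemxAl scalemxAr.
Qed.

Lemma skew_tensorE (r : 'M[F]_n) : skew_tensor r -> forall i j, r j i = - r i j.
Proof. by move=> /matrixP r_skew i j; move: (r_skew i j); rewrite !mxE. Qed.

Lemma pair_rplus (r : 'M[F]_n) : skew_tensor r ->
  forall xi eta : V, pair xi (rplus r eta) = - pair eta (rplus r xi).
Proof.
move=> r_skew xi eta; rewrite /pair /rplus.
under eq_bigr => i _ do rewrite mxE mulr_sumr.
under [in RHS]eq_bigr => i _ do rewrite mxE mulr_sumr.
rewrite exchange_big -sumrN; apply: eq_bigr => j _ /=.
rewrite -sumrN; apply: eq_bigr => i _.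
by rewrite skew_tensorE //; ring.
Qed.

End Coordinates.

Section SkewBilinear.
Variables (F : fieldType) (n : nat) (W : lmodType F).
Variable B : 'rV[F]_n -> 'rV[F]_n -> W.
Hypothesis B_linl : forall z, linear (B^~ z).
Hypothesis B_anti : forall x y, B x y = - B y x.

Lemma skew_linear_r x : linear (B x).
Proof. by move=> a y z; rewrite !(B_anti x) B_linl scalerN opprD. Qed.

Lemma skew_bilinear_expand x y :
  B x y = \sum_a \sum_b (x 0 a * y 0 b) *: B (ebas F a) (ebas F b).
Proof.
rewrite (linear_ebas_expand (B_linl y) x); apply: eq_bigr => a _.
rewrite (linear_ebas_expand (skew_linear_r _) y) scaler_sumr.
by apply: eq_bigr => b _; rewrite scalerA.
Qed.

End SkewBilinear.

Section RotaBaxterDefect.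
Variables (F : fieldType) (n : nat).
Variables (br : 'rV[F]_n -> 'rV[F]_n -> 'rV[F]_n) (r : 'M[F]_n).
Hypothesis br_linl : forall z, linear (br^~ z).
Hypothesis br_anti : forall x y, br x y = - br y x.
Hypothesis r_skew : skew_tensor r.
Local Notation R := (rplus r).
Local Notation e := (ebas F).

Lemma bracket_coordE x y c :
  br x y 0 c = \sum_a \sum_b x 0 a * y 0 b * br (e a) (e b) 0 c.
Proof.
rewrite (skew_bilinear_expand br_linl br_anti) summxE.
by apply: eq_bigr => a _; rewrite summxE; apply: eq_bigr => b _; rewrite mxE.
Qed.

Lemma rplus_ebas_coord a b : R (e a) 0 b = r a b.
Proof. by rewrite /rplus ebas_mulmx mxE. Qed.

Lemma pair_coad x xi y : pair (coad br x xi) y = - pair xi (br x y).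
Proof. by rewrite pairNl pair_dualmap //; apply: skew_linear_r. Qed.

Definition rb_defect u v := br (R u) (R v) - R (coad br (R u) v - coad br (R v) u).

Lemma rb_defect_coord u v k : rb_defect u v 0 k =
  br (R u) (R v) 0 k - pair v (br (R u) (R (e k))) + pair u (br (R v) (R (e k))).
Proof.
rewrite /rb_defect mxE [X in _ + X]mxE -[X in _ - X]pair_ebasl pair_rplus //.
by rewrite pairBl !pair_coad; ring.
Qed.

Lemma r12_r13_coordE i j k :
  \sum_p \sum_q \sum_s \sum_t r p q * r s t * tens3 (br (e p) (e s)) (e q) (e t) i j k
  = br (R (e j)) (R (e k)) 0 i.
Proof.
rewrite bracket_coordE; apply: eq_bigr => p _.
rewrite (big_only1 j) // => [|q qj _]; last first.
  rewrite big1 // => s _; rewrite big1 // => t _.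
  by rewrite /tens3 !ebasE (negbTE qj) !(mul0r, mulr0).
apply: eq_bigr => s _; rewrite (big_only1 k) // => [|t tk _]; last first.
  by rewrite /tens3 !ebasE (negbTE tk) !(mul0r, mulr0).
rewrite /tens3 !ebasE !eqxx !rplus_ebas_coord !mulr1.
by rewrite (skew_tensorE r_skew p j) (skew_tensorE r_skew s k) mulrNN.
Qed.

Lemma r12_r23_coordE i j k :
  \sum_p \sum_q \sum_s \sum_t r p q * r s t * tens3 (e p) (br (e q) (e s)) (e t) i j k
  = - br (R (e i)) (R (e k)) 0 j.
Proof.
rewrite bracket_coordE -sumrN (big_only1 i) // => [|p pi _]; last first.
  rewrite big1 // => q _; rewrite big1 // => s _; rewrite big1 // => t _.
  by rewrite /tens3 !ebasE (negbTE pi) !(mul0r, mulr0).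
apply: eq_bigr => q _; rewrite -sumrN; apply: eq_bigr => s _.
rewrite (big_only1 k) // => [|t tk _]; last first.
  by rewrite /tens3 !ebasE (negbTE tk) !(mul0r, mulr0).
rewrite /tens3 !ebasE !eqxx !rplus_ebas_coord (skew_tensorE r_skew s k).
by rewrite mul1r mulr1 mulrN mulNr opprK.
Qed.

Lemma r13_r23_coordE i j k :
  \sum_p \sum_q \sum_s \sum_t r p q * r s t * tens3 (e p) (e s) (br (e q) (e t)) i j k
  = br (R (e i)) (R (e j)) 0 k.
Proof.
rewrite bracket_coordE (big_only1 i) // => [|p pi _]; last first.
  rewrite big1 // => q _; rewrite big1 // => s _; rewrite big1 // => t _.
  by rewrite /tens3 !ebasE (negbTE pi) !(mul0r, mulr0).
apply: eq_bigr => q _; rewrite (big_only1 j) // => [|s sj _]; last first.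
  rewrite big1 // => t _.
  by rewrite /tens3 !ebasE (negbTE sj) !(mul0r, mulr0).
apply: eq_bigr => t _.
by rewrite /tens3 !ebasE !eqxx !rplus_ebas_coord !mul1r.
Qed.

Lemma CYB_rplusE i j k : CYB br r i j k =
  br (R (e j)) (R (e k)) 0 i + br (R (e i)) (R (e j)) 0 k - br (R (e i)) (R (e k)) 0 j.
Proof.
rewrite /CYB.
under eq_bigr => p _ do under eq_bigr => q _ do under eq_bigr => s _ do
  under eq_bigr => t _ do rewrite !mulrDr.
under eq_bigr => p _ do under eq_bigr => q _ do under eq_bigr => s _ do
  rewrite !big_split.
under eq_bigr => p _ do under eq_bigr => q _ do rewrite !big_split.
under eq_bigr => p _ do rewrite !big_split.
by rewrite !big_split r12_r13_coordE r13_r23_coordE r12_r23_coordE.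
Qed.

Lemma rb_defect_ebas i j k : rb_defect (e i) (e j) 0 k = CYB br r i j k.
Proof. by rewrite rb_defect_coord CYB_rplusE !pair_ebasl; ring. Qed.

Lemma rb_defect_anti u v : rb_defect u v = - rb_defect v u.
Proof.
have RB w w' : R (w - w') = - R (w' - w) by rewrite /rplus -mulNmx opprB.
by rewrite /rb_defect (br_anti (R u)) RB opprD.
Qed.

Lemma rb_defect_linl v : linear (rb_defect^~ v).
Proof.
move=> a u u'; apply/rowP => k.
rewrite [RHS]mxE [in RHS]mxE !rb_defect_coord.
rewrite /rplus mulmxDl -scalemxAl !br_linl pair_scalarr pair_scalarl !mxE.
ring.
Qed.

Lemma rb_bracket_iff_CYB :
  (forall u v, br (R u) (R v) = R (coad br (R u) v - coad br (R v) u)) <->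
  (forall i j k, CYB br r i j k = 0).
Proof.
have defect0 u v : (br (R u) (R v) = R (coad br (R u) v - coad br (R v) u))
    <-> rb_defect u v = 0 by rewrite /rb_defect; split=> [->|/subr0_eq //]; apply: subrr.
split=> [rb i j k | cyb0 u v].
  by rewrite -rb_defect_ebas (defect0 _ _).1 ?mxE.
apply/defect0; rewrite (skew_bilinear_expand rb_defect_linl rb_defect_anti).
rewrite big1 // => a _; rewrite big1 // => b _.
suff -> : rb_defect (e a) (e b) = 0 by rewrite scaler0.
by apply/rowP => k; rewrite rb_defect_ebas cyb0 mxE.
Qed.

End RotaBaxterDefect.

Lemma rb_equivariant_iff (F : fieldType) (n : nat) (E r : 'M[F]_n) :
  (forall u, linop E (rplus r u) = rplus r (dualmap (linop E) u)) <->
  tmap id (linop E) r - tmap (linop E) id r = 0.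
Proof.
have idE : id =1 linop (1%:M : 'M[F]_n) by move=> x; rewrite /linop mulmx1.
rewrite (tmap_linop r idE (frefl _)) (tmap_linop r (frefl _) idE) trmx1 mul1mx mulmx1.
split=> [equi | /subr0_eq rE u].
  apply/eqP; rewrite subr_eq0; apply/eqP/row_matrixP => i.
  by rewrite !rowE !mulmxA -dualmap_linop; apply: equi.
by rewrite dualmap_linop /linop /rplus -!mulmxA rE.
Qed.

Theorem proposition6p6 (F : closedFieldType) (n : nat)
  (charF0 : [pchar F] =i pred0)
  (br : 'rV[F]_n -> 'rV[F]_n -> 'rV[F]_n) (E : 'M[F]_n) (r : 'M[F]_n) :
  is_ENL br E -> skew_tensor r ->
  (is_ENE_RB br E (dualmap (linop E)) (coad br) (rplus r)
   <-> is_EN_rmatrix br E r).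
Proof.
move=> [[br_lin br_anti _] _] r_skew.
have br_linl z : linear (br^~ z) by move=> a x y; apply: br_lin.
have rb_iff := rb_bracket_iff_CYB br_linl br_anti r_skew.
have equi_iff := rb_equivariant_iff E r.
by split=> -[rb equi]; split; by [apply/rb_iff | apply/equi_iff].
Qed.
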